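(* Let $H$ be a Krull monoid with class group $G$, let $G_0\subseteq G$ be the set of classes containing a prime divisor, and let $G_1\subseteq G_0$ be the set of classes containing exactly one prime divisor. The following are equivalent: (a) every irreducible element of $H$ is absolutely irreducible; (b) every irreducible element of $\mathcal B(G_0)$ is absolutely irreducible, and for every irreducible $U\in\mathcal B(G_0)$ and every $g\in G_0\setminus G_1$ we have $\mathsf v_g(U)\le1$.
   Context: $H$ is a cancellative commutative monoid; it is Krull if $v$-noetherian and completely integrally closed. $\mathfrak X(H)$ is the set of nonempty divisorial prime ideals (prime divisors) of $H$; the class group $G$ (written additively) is the group of divisorial fractional ideals modulo principal ones, and $[\mathfrak p]$ is the class of $\mathfrak p$. For $G_0\subseteq G$, $\mathcal F(G_0)$ is the free abelian monoid on $G_0$; its elements $S=\prod_{g\in G_0}g^{\mathsf v_g(S)}$ are sequences, with sum $\sigma(S)=\sum\mathsf v_g(S)g$; $\mathcal B(G_0)=\{S\in\mathcal F(G_0):\sigma(S)=0\}$ is the monoid of zero-sum sequences. Irreducible: non-unit not a product of two non-units. An irreducible $r$ is absolutely irreducible if for every $n$, every factorization of $r^n$ into irreducibles coincides, up to order and associates, with $r\cdots r$. *)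

From mathcomp Require Import all_boot all_algebra.
Set Implicit Arguments. Unset Strict Implicit. Unset Printing Implicit Defensive.
Import GRing.Theory.
Local Open Scope ring_scope.

(* Convention: a cancellative commutative monoid H is represented (up to
   isomorphism) as a submonoid of its quotient group q(H) = Q, written
   ADDITIVELY (Q : zmodType).  So "a * b" in H is a + b, "1" is 0, and
   q(H) = H - H. *)

Section KrullMonoid.
Variable Q : zmodType.
Variable H : Q -> Prop.

Definition set_eq (X Y : Q -> Prop) := forall x, X x <-> Y x.
Definition subset (X Y : Q -> Prop) := forall x, X x -> Y x.
Definition translate (a : Q) (X : Q -> Prop) : Q -> Prop :=
  fun z => exists x, X x /\ z = a + x.

Definition is_submonoid := H 0 /\ (forall a b, H a -> H b -> H (a + b)).
Definition generates_group := forall q : Q, exists a b, H a /\ H b /\ q = a - b.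

Definition ideal_quot (X : Q -> Prop) : Q -> Prop :=
  fun z => forall x, X x -> H (z + x).
Definition vop (X : Q -> Prop) : Q -> Prop := ideal_quot (ideal_quot X).
Definition vprod (X Y : Q -> Prop) : Q -> Prop :=
  vop (fun z => exists x y, X x /\ Y y /\ z = x + y).

Definition m_ideal (X : Q -> Prop) :=
  subset X H /\ forall h x, H h -> X x -> X (h + x).
Definition divisorial_ideal (X : Q -> Prop) := m_ideal X /\ set_eq (vop X) X.

Definition v_noetherian :=
  forall A : nat -> Q -> Prop,
    (forall n, divisorial_ideal (A n)) ->
    (forall n, subset (A n) (A n.+1)) ->
    exists N, forall n, (N <= n)%N -> set_eq (A n) (A N).

Definition completely_integrally_closed :=
  forall x : Q, (exists c, H c /\ forall n, (1 <= n)%N -> H (c + x *+ n)) -> H x.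

Definition krull :=
  [/\ is_submonoid, generates_group, v_noetherian & completely_integrally_closed].

Definition prime_ideal (p : Q -> Prop) :=
  [/\ m_ideal p, (exists h, H h /\ ~ p h) &
      forall a b, H a -> H b -> p (a + b) -> p a \/ p b].
Definition prime_divisor (p : Q -> Prop) :=
  [/\ prime_ideal p, (exists x, p x) & set_eq (vop p) p].

Definition frac_divisorial (X : Q -> Prop) :=
  [/\ (exists x, X x),
      (exists c, H c /\ forall x, X x -> H (c + x)),
      (forall h x, H h -> X x -> X (h + x)) &
      set_eq (vop X) X].

(* (G, cl) is the class group of H: cl induces an isomorphism from the group
   of divisorial fractional ideals (under v-multiplication) modulo the
   principal ones onto G. *)
Definition is_class_group (G : zmodType) (cl : (Q -> Prop) -> G) :=
  [/\ (forall g, exists X, frac_divisorial X /\ cl X = g),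
      (forall X Y, frac_divisorial X -> frac_divisorial Y ->
         (cl X = cl Y <-> exists a, set_eq X (translate a Y))) &
      (forall X Y, frac_divisorial X -> frac_divisorial Y ->
         cl (vprod X Y) = cl X + cl Y)].

Definition m_unit (a : Q) := H a /\ H (- a).
Definition m_irreducible (a : Q) :=
  [/\ H a, ~ m_unit a &
      forall b c, H b -> H c -> a = b + c -> m_unit b \/ m_unit c].
Definition m_associated (a b : Q) := [/\ H a, H b & m_unit (a - b)].
Definition m_abs_irreducible (r : Q) :=
  m_irreducible r /\
  forall (n : nat) (rs : seq Q),
    (forall x, x \in rs -> m_irreducible x) ->
    \sum_(x <- rs) x = r *+ n ->
    size rs = n /\ forall x, x \in rs -> m_associated x r.

Definition classes_G0 (G : zmodType) (cl : (Q -> Prop) -> G) (g : G) :=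
  exists p, prime_divisor p /\ cl p = g.
Definition classes_G1 (G : zmodType) (cl : (Q -> Prop) -> G) (g : G) :=
  exists p, [/\ prime_divisor p, cl p = g &
    forall p', prime_divisor p' -> cl p' = g -> set_eq p' p].

End KrullMonoid.

Section ZeroSum.
Variable G : zmodType.
Variable G0 : G -> Prop.
(* sequences over G0 are seq G taken up to permutation (perm_eq) *)
Definition zs_seq (S : seq G) :=
  (forall g, g \in S -> G0 g) /\ \sum_(g <- S) g = 0.
(* irreducible elements of B(G0) (the only unit is the empty sequence) *)
Definition B_atom (U : seq G) :=
  [/\ zs_seq U, U != [::] &
      forall T V, zs_seq T -> zs_seq V -> perm_eq U (T ++ V) ->
        T = [::] \/ V = [::]].
Definition B_abs_atom (U : seq G) :=
  B_atom U /\
  forall (n : nat) (Vs : seq (seq G)),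
    (forall V, V \in Vs -> B_atom V) ->
    perm_eq (flatten Vs) (flatten (nseq n U)) ->
    size Vs = n /\ forall V, V \in Vs -> perm_eq V U.
End ZeroSum.

From Pilot Require Import Defs.
From mathcomp Require Import all_boot all_algebra boolp zify.
Set Implicit Arguments. Unset Strict Implicit. Unset Printing Implicit Defensive.
Import GRing.Theory.

(* Because the class group of the Krull monoid H is a group, the divisorial
   fractional ideals form a group under v-multiplication; together with the
   ascending chain condition this makes the divisorial ideals of H a free monoid
   on the prime divisors.  Hence a |-> aH identifies H modulo units with the
   monoid of sequences of prime divisors whose classes sum to zero, and taking
   classes maps this monoid onto B(G_0), atoms corresponding to atoms.
   (a) => (b): a factorization of U^n in B(G_0) lifts, class by class, to a
   factorization of r^n in H, up to a unit.  If a class g outside G_1 contains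
   prime divisors p <> p' and U = g g W, then with w a lift of W the equality
   (p p' w)^2 = (p p w) (p' p' w) gives a second factorization of an irreducible
   squared.
   (b) => (a): the classes of a factorization of r^n form a factorization of U^n,
   so every factor has the classes of U.  A prime divisor alone in its class is
   recovered from its class; a class occurring once in U occurs once in each of
   the n factors, by counting. *)

Lemma map_eq_nil (T S : eqType) (f : T -> S) (s : seq T) : (map f s == [::]) = (s == [::]).
Proof. by case: s. Qed.

Lemma flatten_map_map (T S : Type) (f : T -> S) (ss : seq (seq T)) :
  flatten (map (map f) ss) = map f (flatten ss).
Proof. by elim: ss => //= s ss ->; rewrite map_cat. Qed.

Lemma perm_map_cat_lift (T S : eqType) (f : T -> S) (s : seq T) (A B : seq S) :
  perm_eq (map f s) (A ++ B) ->
  exists s1 s2,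
    [/\ perm_eq s (s1 ++ s2), perm_eq (map f s1) A & perm_eq (map f s2) B].
Proof.
elim: A s => [|a A IH] s pe; first by exists [::], s.
have /mapP [x xs fx] : a \in map f s by rewrite (perm_mem pe) mem_head.
subst a.
have pe' : perm_eq (map f (rem x s)) (A ++ B).
  rewrite -(perm_cons (f x)); apply: perm_trans pe.
  by rewrite perm_sym -map_cons perm_map // perm_to_rem.
have [s1 [s2 [p1 p2 p3]]] := IH _ pe'.
exists (x :: s1), s2; split; rewrite ?perm_cons //.
by apply: perm_trans (perm_to_rem xs) _; rewrite /= perm_cons.
Qed.

Lemma perm_count_mem (T : eqType) (s t : seq T) :
  (forall x, count_mem x s = count_mem x t) -> perm_eq s t.
Proof. by move=> h; apply/allP => x _ /=; rewrite h. Qed.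

Lemma count_mem_map_le (T S : eqType) (f : T -> S) (p : T) (s : seq T) :
  count_mem p s <= count_mem (f p) (map f s).
Proof. by rewrite count_map; apply: sub_count => q /= /eqP ->. Qed.

Lemma count_mem_map_in (T S : eqType) (f : T -> S) (p : T) (s : seq T) :
  {in s, forall q, f q = f p -> q = p} ->
  count_mem p s = count_mem (f p) (map f s).
Proof.
move=> inj; rewrite count_map; apply: eq_in_count => q qs /=.
by apply/eqP/eqP => [->|/(inj q qs)].
Qed.

Lemma perm_eq_cons2 (T : eqType) (x : T) (s : seq T) :
  1 < count_mem x s -> exists t, perm_eq s [:: x, x & t].
Proof.
move=> xx; have xs : x \in s by rewrite -has_pred1 has_count ltnW.
have := permP (perm_to_rem xs) (pred1 x); rewrite /= eqxx add1n => cnt.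
have xs' : x \in rem x s by rewrite -has_pred1 has_count -ltnS -cnt.
by exists (rem x (rem x s)); rewrite (perm_trans (perm_to_rem xs)) // perm_cons perm_to_rem.
Qed.

Lemma sumn_eq_mul_size (s : seq nat) (c : nat) :
  {in s, forall x, x <= c} -> sumn s = c * size s -> {in s, forall x, x = c}.
Proof.
have sumn_le (t : seq nat) : {in t, forall x, x <= c} -> sumn t <= c * size t.
  elim: t => //= y t IH le; rewrite mulnS leq_add ?le ?mem_head //.
  by apply: IH => x xt; apply: le; rewrite inE xt orbT.
elim: s => //= y s IH le; rewrite mulnS => e x.
have le' : {in s, forall x, x <= c} by move=> z zs; apply: le; rewrite inE zs orbT.
have := le y (mem_head _ _); have := sumn_le _ le'; rewrite inE => les ley.
case/orP=> [/eqP ->|xs]; first by lia.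
by apply: (IH le') xs; lia.
Qed.

(* In the second alternative the multiplicities of [p] in the blocks are at
   most 1 and add up to [size qss] times its multiplicity in [l]. *)
Lemma perm_eq_nseq_block (T S : eqType) (f : T -> S) (l : seq T) (qss : seq (seq T)) :
  perm_eq (flatten qss) (flatten (nseq (size qss) l)) ->
  {in qss, forall qs, perm_eq (map f qs) (map f l)} ->
  {in flatten qss, forall p,
     {in flatten qss, forall q, f q = f p -> q = p} \/ count_mem (f p) (map f l) <= 1} ->
  {in qss, forall qs, perm_eq qs l}.
Proof.
move=> pe fpe split_p qs qsi; apply: perm_count_mem => p.
have sub_qss : {subset qs <= flatten qss}.
  by move=> x xi; apply/flattenP; exists qs.
have sub_l : {subset l <= flatten qss}.
  move=> x xi; rewrite (perm_mem pe); apply/flattenP; exists l => //.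
  by apply/nseqP; split=> //; case: (qss) qsi.
have [pin|] := boolP ((p \in qs) || (p \in l)); last first.
  by rewrite negb_or => /andP [/count_memPn -> /count_memPn ->].
have pf : p \in flatten qss by case/orP: pin; [apply: sub_qss | apply: sub_l].
case: (split_p p pf) => [inj | le1].
  rewrite !(@count_mem_map_in _ _ f) ?(permP (fpe _ qsi)) //.
    by move=> q /sub_l; apply: inj.
  by move=> q /sub_qss; apply: inj.
pose cs := map (fun s => count_mem p s) qss.
have cs_le1 : {in cs, forall x, x <= 1}.
  move=> x /mapP [qs' qs'i ->]; apply: leq_trans (count_mem_map_le f p qs') _.
  by rewrite (permP (fpe _ qs'i)).
have sum_cs : sumn cs = count_mem p l * size cs.
  by rewrite -count_flatten (permP pe) count_flatten map_nseq sumn_nseq size_map.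
have csi : count_mem p qs \in cs by apply: map_f.
have := leq_trans (count_mem_map_le f p l) le1.
rewrite leq_eqVlt ltnS leqn0 => /orP [/eqP c1 | /eqP c0]; rewrite ?c1 ?c0.
  by apply: (sumn_eq_mul_size cs_le1) csi; rewrite sum_cs c1.
have /natnseq0P cs0 : sumn cs == 0 by rewrite sum_cs c0.
by move: csi; rewrite cs0 => /nseqP [].
Qed.

(** * The v-operation *)

Local Notation "X `<=` Y" := (Defs.subset X Y) (at level 70, no associativity).

Section VOperation.
Local Open Scope ring_scope.
Variable Q : zmodType.
Variable H : Q -> Prop.
Hypothesis H0 : H 0.
Hypothesis HD : forall a b, H a -> H b -> H (a + b).

Definition sumset (X Y : Q -> Prop) : Q -> Prop :=
  fun z => exists x y, X x /\ Y y /\ z = x + y.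
Definition Hmodule (X : Q -> Prop) := forall h x, H h -> X x -> X (h + x).

Lemma set_eqE (X Y : Q -> Prop) : set_eq X Y -> X = Y.
Proof. by move=> e; apply: funext => x; apply: propext. Qed.

Lemma subset_antisym (X Y : Q -> Prop) : X `<=` Y -> Y `<=` X -> X = Y.
Proof. by move=> XY YX; apply: set_eqE => x; split; [apply: XY | apply: YX]. Qed.

Lemma subset_trans (X Y Z : Q -> Prop) : X `<=` Y -> Y `<=` Z -> X `<=` Z.
Proof. by move=> XY YZ x /XY /YZ. Qed.

Lemma ideal_quot_anti X Y : X `<=` Y -> ideal_quot H Y `<=` ideal_quot H X.
Proof. by move=> XY z hz x /XY; apply: hz. Qed.

Lemma sub_vop X : X `<=` vop H X.
Proof. by move=> x Xx z hz; rewrite addrC; apply: hz. Qed.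

Lemma ideal_quot_vop X : ideal_quot H (vop H X) = ideal_quot H X.
Proof.
apply: subset_antisym; first exact/ideal_quot_anti/sub_vop.
by move=> z hz y hy; rewrite addrC; apply: hy.
Qed.

Lemma vop_idem X : vop H (vop H X) = vop H X.
Proof. by rewrite /vop -/(vop H X) ideal_quot_vop. Qed.

Lemma vop_mono X Y : X `<=` Y -> vop H X `<=` vop H Y.
Proof. by move=> XY; apply/ideal_quot_anti/ideal_quot_anti. Qed.

Lemma vop_Hmodule X : Hmodule (vop H X).
Proof. by move=> h z hh hz x Xx; rewrite -addrA; apply: HD => //; apply: hz. Qed.

Lemma vop_H : vop H H = H.
Proof.
have HH : ideal_quot H H = H.
  apply: subset_antisym; last by move=> z hz x; apply: HD.
  by move=> z hz; rewrite -[z]addr0; apply: hz.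
by rewrite /vop HH HH.
Qed.

Lemma sumsetC X Y : sumset X Y = sumset Y X.
Proof.
by apply: set_eqE => z; split=> -[x [y [Xx [Yy ->]]]]; exists y, x; rewrite addrC.
Qed.

Lemma sumsetA X Y Z : sumset X (sumset Y Z) = sumset (sumset X Y) Z.
Proof.
apply: set_eqE => z; split.
  move=> [x [w [Xx [[y [u [Yy [Zu ->]]]] ->]]]]; exists (x + y), u.
  by split; [exists x, y | rewrite addrA].
move=> [w [u [[x [y [Xx [Yy ->]]]] [Zu ->]]]]; exists x, (y + u).
by split=> //; split; [exists y, u | rewrite addrA].
Qed.

Lemma sumsetSl X X' Y : X `<=` X' -> sumset X Y `<=` sumset X' Y.
Proof. by move=> XX' z [x [y [Xx [Yy ->]]]]; exists x, y; split=> //; apply: XX'. Qed.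

Lemma sumsetSr X Y Y' : Y `<=` Y' -> sumset X Y `<=` sumset X Y'.
Proof. by move=> YY'; rewrite !(sumsetC X); apply: sumsetSl. Qed.

Lemma sumset_Hl Y : Hmodule Y -> sumset H Y = Y.
Proof.
move=> mY; apply: subset_antisym; first by move=> z [h [y [hh [Yy ->]]]]; apply: mY.
by move=> y Yy; exists 0, y; rewrite add0r.
Qed.

Lemma vop_sumset_vopl A B : vop H (sumset (vop H A) B) = vop H (sumset A B).
Proof.
congr ideal_quot; apply: subset_antisym.
  exact/ideal_quot_anti/sumsetSl/sub_vop.
move=> z hz w [y [b [hy [Bb ->]]]].
have : ideal_quot H A (z + b).
  by move=> a Aa; rewrite -addrA (addrC b); apply: hz; exists a, b.
by move=> /hy; rewrite addrCA.
Qed.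

Lemma vop_sumset_vopr A B : vop H (sumset A (vop H B)) = vop H (sumset A B).
Proof. by rewrite sumsetC vop_sumset_vopl sumsetC. Qed.

Lemma vprodE X Y : vprod H X Y = vop H (sumset X Y).
Proof. by []. Qed.

Lemma vprodC X Y : vprod H X Y = vprod H Y X.
Proof. by rewrite !vprodE sumsetC. Qed.

Lemma vprodA X Y Z : vprod H X (vprod H Y Z) = vprod H (vprod H X Y) Z.
Proof. by rewrite !vprodE vop_sumset_vopr vop_sumset_vopl sumsetA. Qed.

Lemma vprodSr X Y Y' : Y `<=` Y' -> vprod H X Y `<=` vprod H X Y'.
Proof. by move=> YY'; apply/vop_mono/sumsetSr. Qed.

Lemma sumset_sub_vprod X Y : sumset X Y `<=` vprod H X Y.
Proof. exact: sub_vop. Qed.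

Lemma vprod_Hl Y : Hmodule Y -> vop H Y = Y -> vprod H H Y = Y.
Proof. by move=> mY vY; rewrite vprodE sumset_Hl. Qed.

Lemma vprod_sub X Y : Hmodule X -> vop H X = X -> Y `<=` H -> vprod H X Y `<=` X.
Proof.
move=> mX vX YH; rewrite -{2}vX; apply: vop_mono.
by move=> z [x [y [Xx [Yy ->]]]]; rewrite addrC; apply: mX => //; apply: YH.
Qed.

Lemma translateP (a : Q) (X : Q -> Prop) z : translate a X z <-> X (z - a).
Proof.
split; first by move=> [x [Xx ->]]; rewrite addrC addKr.
by move=> Xz; exists (z - a); split=> //; rewrite addrCA subrr addr0.
Qed.

Lemma translate0 (X : Q -> Prop) : translate 0 X = X.
Proof. by apply: set_eqE => z; rewrite translateP subr0. Qed.

Lemma translateA (a b : Q) (X : Q -> Prop) : translate a (translate b X) = translate (a + b) X.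
Proof. by apply: set_eqE => z; rewrite !translateP opprD addrA. Qed.

Lemma translate_Hmodule (a : Q) X : Hmodule X -> Hmodule (translate a X).
Proof. by move=> mX h z hh /translateP Xz; apply/translateP; rewrite -addrA; apply: mX. Qed.

Lemma vop_translate (a : Q) X : vop H (translate a X) = translate a (vop H X).
Proof.
have iq_tr b Y : ideal_quot H (translate b Y) = translate (- b) (ideal_quot H Y).
  apply: set_eqE => z; rewrite translateP opprK; split=> hz.
    by move=> y Yy; rewrite -addrA; apply: hz; exists y.
  by move=> w [y [Yy ->]]; rewrite addrA; apply: hz.
by rewrite /vop !iq_tr opprK.
Qed.

Lemma vprod_translatel (a : Q) X Y :
  vprod H (translate a X) Y = translate a (vprod H X Y).
Proof.
rewrite !vprodE -vop_translate; congr vop; apply: set_eqE => z; split.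
  move=> [w [y [[x [Xx ->]] [Yy ->]]]]; exists (x + y).
  by split; [exists x, y | rewrite addrA].
move=> [w [[x [y [Xx [Yy ->]]]] ->]]; exists (a + x), y.
by split; [exists x | split=> //; rewrite addrA].
Qed.

Lemma vprod_translater (a : Q) X Y :
  vprod H X (translate a Y) = translate a (vprod H X Y).
Proof. by rewrite vprodC vprod_translatel vprodC. Qed.

Lemma vprod_translateH (a b : Q) :
  vprod H (translate a H) (translate b H) = translate (a + b) H.
Proof.
have HH : Hmodule H by move=> h x; apply: HD.
by rewrite vprod_translatel vprod_translater vprod_Hl ?vop_H ?translateA.
Qed.

End VOperation.

Arguments vprodE {Q H} X Y.
Arguments vprodC {Q H} X Y.
Arguments vprodA {Q H} X Y Z.

(** * Divisor theory of a Krull monoid *)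

Section Krull.
Local Open Scope ring_scope.
Variable Q : zmodType.
Variable H : Q -> Prop.
Variable G : zmodType.
Variable cl : (Q -> Prop) -> G.
Hypothesis KH : krull H.
Hypothesis CG : is_class_group H cl.

Local Notation D := (frac_divisorial H).
Local Notation vop := (vop H).
Local Notation vprod := (vprod H).

Let H0 : H 0. Proof. by case: KH => -[]. Qed.
Let HD a b : H a -> H b -> H (a + b). Proof. by case: KH => -[_ HD] _ _ _; apply: HD. Qed.

Let HHmodule : Hmodule H H. Proof. by move=> h x; apply: HD. Qed.
Let vopH : vop H = H. Proof. exact: vop_H. Qed.
Let vprodHH : vprod H H = H. Proof. exact: vprod_Hl. Qed.

Lemma frac_vopE X : D X -> vop X = X.
Proof. by case=> _ _ _ /set_eqE. Qed.

Lemma frac_Hmodule X : D X -> Hmodule H X.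
Proof. by case. Qed.

Lemma frac_H : D H.
Proof.
split; [by exists 0 | | exact: HHmodule | by rewrite vopH].
by exists 0; split=> // x; rewrite add0r.
Qed.

Lemma frac_translate (a : Q) X : D X -> D (translate a X).
Proof.
case=> [[x Xx] [c [hc bX]] mX /set_eqE vX]; split.
- by exists (a + x), x.
- have [a1 [a2 [h1 h2 ->]]] : exists a1 a2, [/\ H a1, H a2 & a = a1 - a2].
    by case: KH => _ gen _ _; have [a1 [a2 [? [? ?]]]] := gen a; exists a1, a2.
  exists (a2 + c); split; first exact: HD.
  move=> z [y [Yy ->]].
  by rewrite addrACA [a2 + _]addrCA subrr addr0; apply: HD => //; apply: bX.
- exact: translate_Hmodule.
- by move=> z; rewrite vop_translate vX.
Qed.

Lemma frac_vprod X Y : D X -> D Y -> D (vprod X Y).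
Proof.
case=> [[x Xx] [c [hc bX]] _ _]; case=> [[y Yy] [d [hd bY]] _ _]; split.
- by exists (x + y); apply: sumset_sub_vprod; exists x, y.
- exists (c + d); split=> [|z vz]; first exact: HD.
  rewrite addrC; apply: vz => _ [u [v [Xu [Yv ->]]]].
  by rewrite addrACA; apply: HD; [apply: bX | apply: bY].
- exact: vop_Hmodule.
- by rewrite vop_idem.
Qed.

Lemma cl_eqP X Y : D X -> D Y -> cl X = cl Y <-> exists a, X = translate a Y.
Proof.
case: CG => _ clP _ DX DY; rewrite clP //.
by split=> -[a e]; exists a; [apply: set_eqE | rewrite e].
Qed.

Lemma cl_vprod X Y : D X -> D Y -> cl (vprod X Y) = cl X + cl Y.
Proof. by case: CG => _ _; apply. Qed.

Lemma cl_H : cl H = 0.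
Proof.
have := cl_vprod frac_H frac_H; rewrite vprodHH => clHH.
by apply: (addrI (cl H)); rewrite -clHH addr0.
Qed.

Lemma cl_translate (a : Q) X : D X -> cl (translate a X) = cl X.
Proof. by move=> DX; apply/(cl_eqP (frac_translate a DX) DX); exists a. Qed.

(* Surjectivity of [cl] provides v-inverses: the divisorial fractional ideals
   form a group under v-multiplication. *)
Lemma frac_vprodV X : D X -> exists X', D X' /\ vprod X X' = H.
Proof.
case: CG => cl_onto _ _ DX.
have [Y [DY clY]] := cl_onto (- cl X).
have [a ea] : exists a, vprod X Y = translate a H.
  by apply/(cl_eqP (frac_vprod DX DY) frac_H); rewrite cl_vprod // clY cl_H subrr.
exists (translate (- a) Y); split; first exact: frac_translate.
by rewrite vprod_translater ea translateA addNr translate0.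
Qed.

Lemma vprodI X Y Z : D X -> Hmodule H Y -> vop Y = Y -> Hmodule H Z -> vop Z = Z ->
  vprod X Y = vprod X Z -> Y = Z.
Proof.
move=> DX mY vY mZ vZ e; have [X' [_ XX']] := frac_vprodV DX.
have cancel W : Hmodule H W -> vop W = W -> W = vprod X' (vprod X W).
  by move=> mW vW; rewrite vprodA (vprodC X') XX' vprod_Hl.
by rewrite (cancel Y) // (cancel Z) // e.
Qed.

Section PrimeDivisor.
Variable p : Q -> Prop.
Hypothesis pp : prime_divisor H p.

Lemma prime_sub_H : p `<=` H.
Proof. by case: pp => -[[]]. Qed.

Lemma prime_Hmodule : Hmodule H p.
Proof. by case: pp => -[[]]. Qed.

Lemma prime_vop : vop p = p.
Proof. by case: pp => _ _ /set_eqE. Qed.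

Lemma prime_frac : D p.
Proof.
split; [by case: pp | | exact: prime_Hmodule | by rewrite prime_vop].
by exists 0; split=> // x /prime_sub_H; rewrite add0r.
Qed.

Lemma prime_neq_H : p <> H.
Proof. by case: pp => -[_ [h [hh nph]] _] _ _ pH; apply: nph; rewrite pH. Qed.

Lemma prime_sumset_sub (A B : Q -> Prop) : A `<=` H -> B `<=` H ->
  sumset A B `<=` p -> A `<=` p \/ B `<=` p.
Proof.
move=> AH BH ABp; case: pp => -[_ _ p_prime] _ _.
case: (pselect (A `<=` p)) => Ap; [by left | right].
have [a [Aa npa]] : exists a, A a /\ ~ p a.
  by apply: contrapT => nex; apply: Ap => x Ax; apply: contrapT => npx; apply: nex; exists x.
move=> b Bb; have : p (a + b) by apply: ABp; exists a, b.
by case/p_prime; [apply: AH | apply: BH | |].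
Qed.

End PrimeDivisor.

(* With p p' = H, write q = p J where J = p' q is integral; q prime gives
   p <= q, or J <= q and then q p = q, which cancels to p = H. *)
Lemma prime_divisor_sub_eq (p q : Q -> Prop) :
  prime_divisor H p -> prime_divisor H q -> q `<=` p -> q = p.
Proof.
move=> pp pq qp.
have [p' [_ pp']] := frac_vprodV (prime_frac pp).
pose J := vprod p' q.
have JH : J `<=` H by rewrite -pp' vprodC; apply: vprodSr.
have pJ : vprod p J = q.
  by rewrite /J vprodA pp' (vprod_Hl H0 (prime_Hmodule pq) (prime_vop pq)).
have [|pq'|Jq] := prime_sumset_sub pq (prime_sub_H pp) JH.
- by rewrite -pJ; apply: sumset_sub_vprod.
- exact: subset_antisym.
exfalso; apply: (prime_neq_H pp).
apply: (vprodI (prime_frac pq) (prime_Hmodule pp) (prime_vop pp) HHmodule vopH).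
rewrite (vprodC q H) (vprod_Hl H0 (prime_Hmodule pq) (prime_vop pq)).
apply: subset_antisym.
  by apply: vprod_sub; [exact: prime_Hmodule | exact: prime_vop | exact: prime_sub_H].
by rewrite -{1}pJ (vprodC q p); apply: vprodSr.
Qed.

Lemma translateH_sub_H (a : Q) : H a -> translate a H `<=` H.
Proof. by move=> ha z /translateP hz; rewrite -(subrK a z); apply: HD. Qed.

Lemma frac_divisorial_ideal X : D X -> X `<=` H -> divisorial_ideal H X.
Proof. by case=> _ _ mX vX XH. Qed.

Lemma divisorial_maximal (S : (Q -> Prop) -> Prop) :
  (forall X, S X -> divisorial_ideal H X) -> (exists X, S X) ->
  exists M, S M /\ forall Y, S Y -> M `<=` Y -> Y = M.
Proof.
move=> SD [X0 SX0]; apply: contrapT => no_max.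
have step X : S X -> exists Y, [/\ S Y, X `<=` Y & Y <> X].
  move=> SX; apply: contrapT => no_step; apply: no_max; exists X; split=> // Y SY XY.
  by apply: contrapT => YX; apply: no_step; exists Y.
pose next X := if pselect (exists Y, [/\ S Y, X `<=` Y & Y <> X]) is left e
  then proj1_sig (cid e) else X.
have nextP X : S X -> [/\ S (next X), X `<=` next X & next X <> X].
  move=> SX; rewrite /next; case: pselect => [e | ne]; first exact: (proj2_sig (cid e)).
  by case: ne; apply: step.
pose A n := iter n next X0.
have SA n : S (A n) by elim: n => //= n IH; case: (nextP _ IH).
have [N stable] : exists N, forall n, (N <= n)%N -> set_eq (A n) (A N).
  by case: KH => _ _ vN _; apply: vN => n; [apply: SD | case: (nextP _ (SA n))].
by case: (nextP _ (SA N)) => _ _; apply; apply/set_eqE/(stable N.+1).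
Qed.

(* For c in H outside M, the v-ideal generated by M and c + H is H by
   maximality; if a + b is in M but a, b are not, the v-product of the two
   corresponding ideals, which is H, would lie in M. *)
Lemma max_divisorial_prime M :
  divisorial_ideal H M -> M <> H -> (exists x, M x) ->
  (forall Y, divisorial_ideal H Y -> Y <> H -> M `<=` Y -> Y = M) ->
  prime_divisor H M.
Proof.
move=> [[MH mM] /set_eqE vM] MneH Mx maxM.
pose adjoin c z := M z \/ translate c H z.
have adjoin_sub_H c : H c -> adjoin c `<=` H.
  by move=> hc z [/MH | /(translateH_sub_H hc)].
have vop_adjoin c : H c -> ~ M c -> vop (adjoin c) = H.
  move=> hc nMc; apply: contrapT => ne; apply: nMc.
  have M_adj : M `<=` vop (adjoin c) by move=> x Mx'; apply: sub_vop; left.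
  rewrite -(maxM _ _ ne M_adj); first by apply: sub_vop; right; exists 0; rewrite addr0.
  split; last by move=> x; rewrite vop_idem.
  split; last exact: vop_Hmodule.
  by move=> x /(vop_mono (adjoin_sub_H c hc)); rewrite vopH.
have [h [hh nMh]] : exists h, H h /\ ~ M h.
  apply: contrapT => nex; apply: MneH; apply: subset_antisym => // h hh.
  by apply: contrapT => nMh; apply: nex; exists h.
split=> //; last by rewrite vM.
split; [by split | by exists h |].
move=> a b ha hb Mab; apply: contrapT => /not_orP [nMa nMb]; apply: MneH.
apply: subset_antisym => // x hx.
have : vprod (vop (adjoin a)) (vop (adjoin b)) x by rewrite !vop_adjoin ?vprodHH.
rewrite vprodE vop_sumset_vopl vop_sumset_vopr -vM; apply: vop_mono.
move=> _ [u [v [[Mu | /translateP hu] [bv ->]]]].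
  by rewrite addrC; apply: mM Mu; apply: (adjoin_sub_H b hb).
case: bv => [Mv | /translateP hv].
  by apply: mM Mv; rewrite -(subrK a u); apply: HD.
by rewrite -(subrK a u) -(subrK b v) addrACA; apply: mM => //; apply: HD.
Qed.

Lemma prime_divisor_above X : D X -> X `<=` H -> X <> H ->
  exists p, prime_divisor H p /\ X `<=` p.
Proof.
move=> DX XH XneH.
pose S Y := [/\ X `<=` Y, divisorial_ideal H Y & Y <> H].
have [M [[XM DM MneH] maxM]] : exists M, S M /\ forall Y, S Y -> M `<=` Y -> Y = M.
  apply: divisorial_maximal => [Y [] // | ].
  by exists X; split=> //; apply: frac_divisorial_ideal.
exists M; split=> //; apply: max_divisorial_prime => //.
  by case: DX => [[x Xx] _ _ _]; exists x; apply: XM.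
by move=> Y DY YneH MY; apply: maxM => //; split=> // x /XM /MY.
Qed.

(** * Factorization into prime divisors *)

Definition prime_seq (ps : seq (Q -> Prop)) := {in ps, forall p, prime_divisor H p}.
Definition vprod_seq (ps : seq (Q -> Prop)) := foldr vprod H ps.

Lemma prime_seq_sub ps qs : {subset qs <= ps} -> prime_seq ps -> prime_seq qs.
Proof. by move=> qsps pps p /qsps /pps. Qed.

Lemma prime_seq_perm ps qs : perm_eq ps qs -> prime_seq ps -> prime_seq qs.
Proof. by move=> pe; apply: prime_seq_sub => p; rewrite (perm_mem pe). Qed.

Lemma prime_seq_cons p ps : prime_seq (p :: ps) <-> prime_divisor H p /\ prime_seq ps.
Proof.
split=> [pps | [pp pps] q]; last by rewrite inE => /orP [/eqP -> | /pps].
split; first by apply: pps; rewrite mem_head.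
by apply: prime_seq_sub pps => q qs; rewrite inE qs orbT.
Qed.

Lemma prime_seq_cat ps qs : prime_seq (ps ++ qs) <-> prime_seq ps /\ prime_seq qs.
Proof.
split=> [pps | [pps pqs] p]; last by rewrite mem_cat => /orP [/pps | /pqs].
by split; apply: prime_seq_sub pps => p pi; rewrite mem_cat pi ?orbT.
Qed.

Lemma prime_seq_flatten qss : {in qss, forall qs, prime_seq qs} -> prime_seq (flatten qss).
Proof. by move=> pqss p /flattenP [qs /pqss]; apply. Qed.

Lemma vprod_seq_Hmodule ps : Hmodule H (vprod_seq ps).
Proof. by case: ps => [|p ps]; [exact: HHmodule | exact: vop_Hmodule]. Qed.

Lemma vprod_seq_vop ps : vop (vprod_seq ps) = vprod_seq ps.
Proof. by case: ps => [|p ps]; [exact: vopH | exact: vop_idem]. Qed.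

Lemma vprod_seq_frac ps : prime_seq ps -> D (vprod_seq ps).
Proof.
elim: ps => [_ | p ps IH /prime_seq_cons [pp pps]]; first exact: frac_H.
by apply: frac_vprod; [exact: prime_frac | exact: IH].
Qed.

Lemma vprod_seq_sub_H ps : prime_seq ps -> vprod_seq ps `<=` H.
Proof.
elim: ps => [_ // | p ps IH /prime_seq_cons [pp pps]].
apply: subset_trans (prime_sub_H pp).
by apply: vprod_sub; [exact: prime_Hmodule | exact: prime_vop | exact: IH].
Qed.

Lemma vprod_seq_cat ps qs : vprod_seq (ps ++ qs) = vprod (vprod_seq ps) (vprod_seq qs).
Proof.
elim: ps => [|p ps IH] /=; last by rewrite IH vprodA.
by rewrite (vprod_Hl H0 (@vprod_seq_Hmodule qs) (vprod_seq_vop qs)).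
Qed.

Lemma vprod_seq_rem p ps : p \in ps -> vprod_seq ps = vprod p (vprod_seq (rem p ps)).
Proof.
elim: ps => [|q ps IH] //=; rewrite inE => /predU1P [<- | pps]; first by rewrite eqxx.
case: eqP => [-> // | _] /=.
by rewrite (IH pps) vprodA (vprodC q p) -vprodA.
Qed.

Lemma vprod_seq_perm ps qs : perm_eq ps qs -> vprod_seq ps = vprod_seq qs.
Proof.
elim: ps qs => [|p ps IH] qs pe; first by move: pe; rewrite perm_sym => /perm_nilP ->.
have pqs : p \in qs by rewrite -(perm_mem pe) mem_head.
rewrite (vprod_seq_rem pqs) /=; congr vprod; apply: IH.
by rewrite -(perm_cons p); apply: perm_trans pe (perm_to_rem pqs).
Qed.

Lemma vprod_seq_sub_mem p ps : prime_seq ps -> p \in ps -> vprod_seq ps `<=` p.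
Proof.
move=> pps pi; rewrite (vprod_seq_rem pi); have pp := pps _ pi.
apply: vprod_sub; [exact: prime_Hmodule | exact: prime_vop | apply: vprod_seq_sub_H].
by apply: prime_seq_sub pps => q /mem_rem.
Qed.

Lemma mem_of_vprod_seq_sub p qs : prime_divisor H p -> prime_seq qs ->
  vprod_seq qs `<=` p -> p \in qs.
Proof.
move=> pp; elim: qs => [_ Hp | q qs IH /prime_seq_cons [pq pqs] qsp].
  by case: (prime_neq_H pp); apply: subset_antisym => //; exact: prime_sub_H.
have [|qp|] := prime_sumset_sub pp (prime_sub_H pq) (vprod_seq_sub_H pqs).
- by apply: subset_trans qsp; apply: sumset_sub_vprod.
- by rewrite (prime_divisor_sub_eq pp pq qp) mem_head.
- by move/(IH pqs); rewrite inE orbC => ->.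
Qed.

Lemma vprod_seq_inj ps qs : prime_seq ps -> prime_seq qs ->
  vprod_seq ps = vprod_seq qs -> perm_eq ps qs.
Proof.
elim: ps qs => [|p ps IH] qs pps pqs e.
  case: qs pqs e => // q qs pqs e; have pq := pqs _ (mem_head q qs).
  case: (prime_neq_H pq); apply: subset_antisym; first exact: prime_sub_H.
  by rewrite [X in X `<=` _]e; apply: vprod_seq_sub_mem => //; rewrite mem_head.
move: (pps) => /prime_seq_cons [pp pps'].
have pi : p \in qs.
  apply: mem_of_vprod_seq_sub => //; rewrite -e.
  by apply: vprod_seq_sub_mem => //; rewrite mem_head.
rewrite perm_sym (perm_trans (perm_to_rem pi)) // perm_cons perm_sym IH //.
  by apply: prime_seq_sub pqs => q /mem_rem.
apply: (vprodI (prime_frac pp) (@vprod_seq_Hmodule _) (vprod_seq_vop _)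
  (@vprod_seq_Hmodule _) (vprod_seq_vop _)).
by rewrite -(vprod_seq_rem pi) -e.
Qed.

(* A maximal counterexample X lies in a prime divisor p, so X = p Z with
   X <= Z; Z cannot factor, hence Z = X, and cancelling X gives p = H. *)
Lemma vprod_seq_exists X0 : D X0 -> X0 `<=` H ->
  exists2 ps, prime_seq ps & X0 = vprod_seq ps.
Proof.
move=> DX0 X0H; apply: contrapT => no_fact.
pose S Y := [/\ D Y, Y `<=` H & ~ exists2 ps, prime_seq ps & Y = vprod_seq ps].
have [X [[DX XH nfX] maxX]] : exists M, S M /\ forall Y, S Y -> M `<=` Y -> Y = M.
  by apply: divisorial_maximal; [move=> Y [DY YH _]; exact: frac_divisorial_ideal | exists X0].
have XneH : X <> H by move=> XH'; apply: nfX; exists [::].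
have [p [pp Xp]] := prime_divisor_above DX XH XneH.
have [p' [Dp' pp']] := frac_vprodV (prime_frac pp).
have vprodHX := vprod_Hl H0 (frac_Hmodule DX) (frac_vopE DX).
pose Z := vprod p' X.
have DZ : D Z by apply: frac_vprod.
have pZ : vprod p Z = X by rewrite /Z vprodA pp' vprodHX.
have XZ : X `<=` Z.
  rewrite -pZ vprodC; apply: vprod_sub; [exact: frac_Hmodule DZ | exact: frac_vopE DZ |].
  exact: prime_sub_H.
have [[ps pps eZ] | nfZ] := pselect (exists2 ps, prime_seq ps & Z = vprod_seq ps).
  by apply: nfX; exists (p :: ps); [apply/prime_seq_cons | rewrite /= -eZ pZ].
have ZX : Z = X.
  apply: maxX XZ; split=> //.
  by rewrite -pp' vprodC; apply: vprodSr.
case: (prime_neq_H pp); apply: (vprodI DX (prime_Hmodule pp) (prime_vop pp) HHmodule vopH).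
by rewrite vprodC -[in LHS]ZX pZ vprodC vprodHX.
Qed.

Lemma cl_vprod_seq ps : prime_seq ps -> cl (vprod_seq ps) = \sum_(p <- ps) cl p.
Proof.
elim: ps => [_ | p ps IH /prime_seq_cons [pp pps]]; first by rewrite big_nil cl_H.
by rewrite big_cons cl_vprod ?IH //; [exact: prime_frac | exact: vprod_seq_frac].
Qed.

(** * Principal ideals and zero-sum sequences *)

Lemma translateH_self (a : Q) : translate a H a.
Proof. by exists 0; rewrite addr0. Qed.

Lemma translateH_eqP (a b : Q) : translate a H = translate b H <-> m_unit H (a - b).
Proof.
split=> [e | [hab hba]].
  split; first by have := translateH_self a; rewrite e => /translateP.
  by rewrite opprB; have := translateH_self b; rewrite -e => /translateP.
apply: set_eqE => z; rewrite !translateP opprB in hba *.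
by split=> hz; [rewrite -(addrNK a z) -addrA | rewrite -(addrNK b z) -addrA]; apply: HD.
Qed.

Lemma unit_translateHP (u : Q) : m_unit H u <-> translate u H = H.
Proof. by rewrite -[X in _ <-> _ = X](translate0 H) translateH_eqP subr0. Qed.

Lemma translateH_add (b c : Q) :
  translate (b + c) H = vprod (translate b H) (translate c H).
Proof. by rewrite vprod_translateH. Qed.

Definition zero_class (ps : seq (Q -> Prop)) := \sum_(p <- ps) cl p = 0.

Lemma zero_class_perm ps qs : perm_eq ps qs -> zero_class ps -> zero_class qs.
Proof. by move=> pe; rewrite /zero_class (perm_big _ pe). Qed.

Lemma zero_class_catr ps qs : zero_class ps -> zero_class (ps ++ qs) -> zero_class qs.
Proof. by rewrite /zero_class big_cat => -> /=; rewrite add0r. Qed.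

Lemma principal_of_zero_class ps : prime_seq ps -> zero_class ps ->
  exists2 a, H a & translate a H = vprod_seq ps.
Proof.
move=> pps zps.
have [a ea] : exists a, vprod_seq ps = translate a H.
  by apply/(cl_eqP (vprod_seq_frac pps) frac_H); rewrite cl_vprod_seq // zps cl_H.
by exists a => //; apply: (vprod_seq_sub_H pps); rewrite ea; apply: translateH_self.
Qed.

Lemma principal_factorization (a : Q) : H a ->
  exists2 ps, prime_seq ps & translate a H = vprod_seq ps.
Proof.
move=> ha; apply: vprod_seq_exists; first exact/frac_translate/frac_H.
by move=> z /translateP hz; rewrite -(subrK a z); apply: HD.
Qed.

Lemma zero_class_of_principal (a : Q) ps : prime_seq ps ->
  translate a H = vprod_seq ps -> zero_class ps.
Proof.
by move=> pps e; rewrite /zero_class -cl_vprod_seq // -e cl_translate ?cl_H //; exact: frac_H.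
Qed.

Lemma unit_principalP (b : Q) ps : prime_seq ps -> translate b H = vprod_seq ps ->
  m_unit H b <-> ps = [::].
Proof.
move=> pps e; rewrite unit_translateHP e; split=> [e0 | -> //].
by apply/perm_nilP; apply: vprod_seq_inj.
Qed.

Definition prime_atom (ps : seq (Q -> Prop)) :=
  ps != [::] /\
  forall s1 s2, perm_eq ps (s1 ++ s2) -> zero_class s1 -> s1 = [::] \/ s2 = [::].

Lemma irreducible_prime_atom (a : Q) ps : H a -> prime_seq ps ->
  translate a H = vprod_seq ps -> m_irreducible H a <-> prime_atom ps.
Proof.
move=> ha pps e; have zps := zero_class_of_principal pps e; split.
  move=> [_ nua irr]; split.
    by apply: contra_not_neq nua => ps0; rewrite (unit_principalP pps e).
  move=> s1 s2 pe z1.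
  have /prime_seq_cat [ps1 ps2] := prime_seq_perm pe pps.
  have z2 := zero_class_catr z1 (zero_class_perm pe zps).
  have [b hb eb] := principal_of_zero_class ps1 z1.
  have [c hc ec] := principal_of_zero_class ps2 z2.
  have /translateH_eqP unit_u : translate a H = translate (b + c) H.
    by rewrite e (vprod_seq_perm pe) vprod_seq_cat translateH_add eb ec.
  set u := a - (b + c) in unit_u; have [hu hNu] := unit_u.
  have ea : a = b + (c + u) by rewrite /u addrA addrC subrK.
  case: (irr b (c + u) hb (HD hc hu) ea) => [/(unit_principalP ps1 eb) | cu_unit].
    by left.
  move/unit_translateHP: cu_unit => cuH.
  right; apply/(unit_principalP ps2 ec)/unit_translateHP; rewrite -[RHS]cuH.
  by apply/translateH_eqP; rewrite opprD addrA subrr add0r; split; rewrite ?opprK.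
move=> [nps pa]; split=> // [/(unit_principalP pps e) ps0 | b c hb hc eabc].
  by rewrite ps0 in nps.
have [lb plb eb] := principal_factorization hb.
have [lc plc ec] := principal_factorization hc.
have pe : perm_eq ps (lb ++ lc).
  apply: vprod_seq_inj => //; first exact/prime_seq_cat.
  by rewrite -e vprod_seq_cat -eb -ec -translateH_add eabc.
case: (pa _ _ pe (zero_class_of_principal plb eb)) => [lb0 | lc0].
  by left; apply/(unit_principalP plb eb).
by right; apply/(unit_principalP plc ec).
Qed.

Local Notation G0 := (classes_G0 H cl).

Lemma zs_seq_map_cl ps : prime_seq ps -> zero_class ps -> zs_seq G0 (map cl ps).
Proof.
move=> pps zps; split; last by rewrite big_map.
by move=> g /mapP [p pi ->]; exists p; split=> //; apply: pps.
Qed.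

Lemma B_atom_perm U V : perm_eq U V -> B_atom G0 U -> B_atom G0 V.
Proof.
move=> pe [[U_G0 sU] nU U_irr]; split.
- by split; [move=> g; rewrite -(perm_mem pe); apply: U_G0 | rewrite -(perm_big _ pe)].
- by apply: contra nU => /eqP V0; apply/eqP/perm_nilP; rewrite -V0.
- by move=> T W zT zW pe'; apply: U_irr => //; apply: perm_trans pe pe'.
Qed.

Lemma B_atom_map_cl ps : prime_seq ps -> zero_class ps ->
  B_atom G0 (map cl ps) <-> prime_atom ps.
Proof.
move=> pps zps; split=> [[_ nU U_irr] | [nps ps_irr]].
  split=> [|s1 s2 pe z1]; first by apply: contra nU => /eqP ->.
  have /prime_seq_cat [ps1 ps2] := prime_seq_perm pe pps.
  have z2 := zero_class_catr z1 (zero_class_perm pe zps).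
  have := U_irr _ _ (zs_seq_map_cl ps1 z1) (zs_seq_map_cl ps2 z2).
  rewrite -map_cat perm_map // => /(_ isT) [] /eqP; rewrite map_eq_nil => /eqP ->.
    by left.
  by right.
split; [exact: zs_seq_map_cl | by rewrite map_eq_nil |].
move=> T V [_ sT] _ /perm_map_cat_lift [s1 [s2 [pe pe1 pe2]]].
have z1 : zero_class s1.
  by rewrite /zero_class -(big_map cl xpredT (fun g => g)) (perm_big _ pe1).
by case: (ps_irr _ _ pe z1) => s0; [left; move: pe1 | right; move: pe2];
  rewrite s0 perm_sym => /perm_nilP.
Qed.

(* Choice functions, with junk values [H], [0] and [[::]] outside their domains. *)
Definition prime_of_class (g : G) : Q -> Prop :=
  if pselect (exists p, prime_divisor H p /\ cl p = g) is left e then sval (cid e) else H.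

Local Notation lift := (map prime_of_class).

Definition generator (ps : seq (Q -> Prop)) : Q :=
  if pselect (exists a, H a /\ translate a H = vprod_seq ps) is left e
  then sval (cid e) else 0.

Definition factors (a : Q) : seq (Q -> Prop) :=
  if pselect (exists ps, prime_seq ps /\ translate a H = vprod_seq ps) is left e
  then sval (cid e) else [::].

Lemma prime_of_classP g : G0 g ->
  prime_divisor H (prime_of_class g) /\ cl (prime_of_class g) = g.
Proof. by rewrite /prime_of_class; case: pselect => [e _ | ne /ne //]; case: (cid e). Qed.

Lemma generatorP ps : prime_seq ps -> zero_class ps ->
  H (generator ps) /\ translate (generator ps) H = vprod_seq ps.
Proof.
move=> pps zps; rewrite /generator; case: pselect => [e | []]; first by case: (cid e).
by have [a ha ea] := principal_of_zero_class pps zps; exists a.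
Qed.

Lemma factorsP (a : Q) : H a -> prime_seq (factors a) /\ translate a H = vprod_seq (factors a).
Proof.
move=> ha; rewrite /factors; case: pselect => [e | []]; first by case: (cid e).
by have [ps pps eps] := principal_factorization ha; exists ps.
Qed.

Lemma prime_lift_seq U : {in U, forall g, G0 g} -> prime_seq (lift U) /\ map cl (lift U) = U.
Proof.
move=> U_G0; split; first by move=> _ /mapP [g /U_G0 /prime_of_classP [pp _] ->].
by rewrite -map_comp; apply: map_id_in => g /U_G0 /prime_of_classP [].
Qed.

Lemma prime_lift U : zs_seq G0 U ->
  [/\ prime_seq (lift U), map cl (lift U) = U & zero_class (lift U)].
Proof.
move=> [/prime_lift_seq [pU clU] sU]; split=> //.
by rewrite /zero_class -(big_map cl xpredT (fun g => g)) clU.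
Qed.

Lemma associated_principalP (x r : Q) : H x -> H r ->
  m_associated H x r <-> translate x H = translate r H.
Proof. by move=> hx hr; rewrite translateH_eqP; split=> [[] | ]. Qed.

Lemma irreducible_of_B_atom (x : Q) ps : H x -> prime_seq ps ->
  translate x H = vprod_seq ps -> B_atom G0 (map cl ps) -> m_irreducible H x.
Proof.
move=> hx pps ex /(B_atom_map_cl pps (zero_class_of_principal pps ex)).
by move/(irreducible_prime_atom hx pps ex).
Qed.

Lemma translate_mulrn (r : Q) ps n : translate r H = vprod_seq ps ->
  translate (r *+ n) H = vprod_seq (flatten (nseq n ps)).
Proof.
move=> e; elim: n => [|n IH]; first by rewrite mulr0n translate0.
by rewrite mulrS /= translateH_add vprod_seq_cat IH e.
Qed.

(* A factorization of the principal ideal [a H] into principal v-ideals lifts to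
   a factorization of [a] itself, after absorbing a unit into the first factor. *)
Lemma lift_factorization (a : Q) qss : qss != [::] ->
  {in qss, forall qs, prime_seq qs /\ zero_class qs} ->
  translate a H = vprod_seq (flatten qss) ->
  exists2 rs, {in rs, forall x, H x} &
    \sum_(x <- rs) x = a /\ map (fun x => translate x H) rs = map vprod_seq qss.
Proof.
case: qss => // q0 qss _ pqss ea.
have gen qs : qs \in q0 :: qss ->
    H (generator qs) /\ translate (generator qs) H = vprod_seq qs.
  by case/pqss; apply: generatorP.
have /translateH_eqP [hu hNu] :
    translate a H = translate (\sum_(qs <- q0 :: qss) generator qs) H.
  rewrite ea; elim: (q0 :: qss) gen => [_ | qs s IH gen]; first by rewrite big_nil translate0.
  rewrite big_cons /= vprod_seq_cat translateH_add (gen qs (mem_head _ _)).2 IH //.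
  by move=> t ts; apply: gen; rewrite inE ts orbT.
set u := a - _ in hu hNu; have [hg0 eg0] := gen q0 (mem_head _ _).
exists (generator q0 + u :: map generator qss).
  move=> x; rewrite inE => /predU1P [-> | /mapP [qs qsi ->]]; first exact: HD.
  by apply: (gen qs _).1; rewrite inE qsi orbT.
split; first by rewrite big_cons big_map addrAC /u big_cons addrC subrK.
rewrite /= -eg0; congr cons.
  by apply/translateH_eqP; rewrite addrC addKr.
rewrite -map_comp; apply/eq_in_map => qs qsi /=.
by apply: (gen qs _).2; rewrite inE qsi orbT.
Qed.

Lemma irreducible_of_lift (x : Q) V : B_atom G0 V -> H x ->
  translate x H = vprod_seq (lift V) -> m_irreducible H x.
Proof.
move=> BV hx ex; have [zV _ _] := BV; have [pV clV _] := prime_lift zV.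
by apply: (irreducible_of_B_atom hx pV ex); rewrite clV.
Qed.

Lemma perm_of_associated (x r : Q) V U : zs_seq G0 V -> zs_seq G0 U -> H x -> H r ->
  translate x H = vprod_seq (lift V) -> translate r H = vprod_seq (lift U) ->
  m_associated H x r -> perm_eq V U.
Proof.
move=> zV zU hx hr ex er /(associated_principalP hx hr).
have [pV clV _] := prime_lift zV; have [pU clU _] := prime_lift zU.
rewrite ex er => /(vprod_seq_inj pV pU) /(perm_map cl).
by rewrite clV clU.
Qed.

Lemma B_abs_atom_of_abs_irreducible :
  (forall r, m_irreducible H r -> m_abs_irreducible H r) ->
  forall U, B_atom G0 U -> B_abs_atom G0 U.
Proof.
move=> abs U BU; split=> // n Vs Vs_atoms pe.
have [zU nU _] := BU; have [pl _ zl] := prime_lift zU.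
have [hr er] := generatorP pl zl; set r := generator _ in hr er.
have zVs V : V \in Vs -> zs_seq G0 V by case/Vs_atoms.
have [Vs0 | nVs] := eqVneq Vs [::].
  case: n pe => [|n]; first by rewrite Vs0.
  rewrite Vs0 perm_sym => /perm_nilP /(congr1 size) /eqP.
  by rewrite /= size_cat addn_eq0 size_eq0 (negbTE nU).
have [|||rs hrs [sum_rs trs]] := @lift_factorization (r *+ n) (map lift Vs).
- by rewrite map_eq_nil.
- by move=> _ /mapP [V /zVs /prime_lift [pV _ zV] ->].
- rewrite (translate_mulrn n er) -map_nseq flatten_map_map.
  by apply: vprod_seq_perm; rewrite (flatten_map_map _ Vs) perm_map // perm_sym.
have rs_irr : {in rs, forall x, m_irreducible H x}.
  move=> x xi; have : translate x H \in map vprod_seq (map lift Vs).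
    by rewrite -trs (map_f (fun y => translate y H)).
  by case/mapP=> _ /mapP [V Vi ->]; apply: irreducible_of_lift (Vs_atoms V Vi) (hrs x xi).
have [size_rs rs_assoc] := (abs r (irreducible_of_lift BU hr er)).2 n rs rs_irr sum_rs.
split=> [|V Vi]; first by rewrite -size_rs -(size_map (fun x => translate x H)) trs !size_map.
have /mapP [x xi ex] : vprod_seq (lift V) \in map (fun x => translate x H) rs.
  by rewrite trs !map_f.
exact: perm_of_associated (zVs V Vi) zU (hrs x xi) hr (esym ex) er (rs_assoc x xi).
Qed.

Lemma other_prime_of_class g : G0 g -> ~ classes_G1 H cl g ->
  exists p', [/\ prime_divisor H p', cl p' = g & p' <> prime_of_class g].
Proof.
move=> G0g nG1; have [pp clp] := prime_of_classP G0g.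
apply: contrapT => no_other; apply: nG1; exists (prime_of_class g); split=> // q pq clq.
have [-> z | nq] := pselect (q = prime_of_class g); first by split.
by case: no_other; exists q.
Qed.

Lemma count_le1_of_abs_irreducible :
  (forall r, m_irreducible H r -> m_abs_irreducible H r) ->
  forall U g, B_atom G0 U -> G0 g -> ~ classes_G1 H cl g -> (count_mem g U <= 1)%N.
Proof.
move=> abs U g BU G0g nG1; rewrite leqNgt; apply/negP => /perm_eq_cons2 [W pU].
have [pp clp] := prime_of_classP G0g; set p := prime_of_class g in pp clp.
have [p' [pp' clp' p'p]] := other_prime_of_class G0g nG1.
have BW := B_atom_perm pU BU; have [[W_G0 sW] _ _] := BW.
have [pw clw] : prime_seq (lift W) /\ map cl (lift W) = W.
  by apply: prime_lift_seq => h hW; apply: W_G0; rewrite !inE hW !orbT.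
set w := lift W in pw clw.
have atom q q' : prime_divisor H q -> prime_divisor H q' -> cl q = g -> cl q' = g ->
    [/\ prime_seq [:: q, q' & w], zero_class [:: q, q' & w]
       & B_atom G0 (map cl [:: q, q' & w])].
  move=> pq pq' clq clq'.
  have clqs : map cl [:: q, q' & w] = [:: g, g & W] by rewrite /= clq clq' clw.
  split; [by apply/prime_seq_cons; split=> //; apply/prime_seq_cons | | by rewrite clqs].
  by rewrite /zero_class -(big_map cl xpredT (fun g => g)) clqs.
have [pr zr Br] := atom p p' pp pp' clp clp'.
have [pb zb Bb] := atom p p pp pp clp clp.
have [pc zc Bc] := atom p' p' pp' pp' clp' clp'.
have [hr er] := generatorP pr zr; set r := generator _ in hr er.
have [|||rs hrs [sum_rs trs]] :=
  @lift_factorization (r *+ 2) [:: [:: p, p & w]; [:: p', p' & w]] => //.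
- by move=> qs; rewrite !inE => /orP [] /eqP ->.
- rewrite (translate_mulrn 2 er); apply: vprod_seq_perm; apply: perm_count_mem => x.
  by rewrite /= !cats0 !count_cat /=; case: (p == x); case: (p' == x); rewrite ?addnS ?addSn.
have rs_irr : {in rs, forall x, m_irreducible H x}.
  move=> x xi; have : translate x H \in map vprod_seq [:: [:: p, p & w]; [:: p', p' & w]].
    by rewrite -trs (map_f (fun y => translate y H)).
  rewrite !inE => /orP [] /eqP ex.
    exact: irreducible_of_B_atom (hrs x xi) pb ex Bb.
  exact: irreducible_of_B_atom (hrs x xi) pc ex Bc.
have [_ rs_assoc] := (abs r (irreducible_of_B_atom hr pr er Br)).2 2 rs rs_irr sum_rs.
have /mapP [x xi ex] : vprod_seq [:: p, p & w] \in map (fun x => translate x H) rs.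
  by rewrite trs mem_head.
have := rs_assoc x xi => /(associated_principalP (hrs x xi) hr).
rewrite -ex er => /(vprod_seq_inj pb pr) /permP /(_ (pred1 p')) /=.
have /negbTE -> : p != p' by apply/eqP => pE; apply: p'p (esym pE).
by rewrite eqxx /=; lia.
Qed.

Lemma translate_sum_factors (rs : seq Q) : {in rs, forall x, H x} ->
  translate (\sum_(x <- rs) x) H = vprod_seq (flatten (map factors rs)).
Proof.
elim: rs => [_ | x rs IH hrs]; first by rewrite big_nil translate0.
rewrite big_cons /= translateH_add vprod_seq_cat IH => [|y yrs].
  by rewrite -(factorsP (hrs x (mem_head _ _))).2.
by apply: hrs; rewrite inE yrs orbT.
Qed.

Lemma abs_irreducible_of_B :
  (forall U, B_atom G0 U -> B_abs_atom G0 U) ->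
  (forall U g, B_atom G0 U -> G0 g -> ~ classes_G1 H cl g -> (count_mem g U <= 1)%N) ->
  forall r, m_irreducible H r -> m_abs_irreducible H r.
Proof.
move=> B_abs B_count r ir; split=> // n rs rs_irr sum_rs.
have hr : H r by case: ir.
have [pl el] := factorsP hr; set l := factors r in pl el.
have zl := zero_class_of_principal pl el.
have BU : B_atom G0 (map cl l).
  by apply/(B_atom_map_cl pl zl)/(irreducible_prime_atom hr pl el).
have hrs : {in rs, forall x, H x} by move=> x /rs_irr [].
pose qss := map factors rs.
have pqss : {in qss, forall qs, prime_seq qs} by move=> _ /mapP [x /hrs /factorsP [] ? _ ->].
have pe : perm_eq (flatten qss) (flatten (nseq n l)).
  apply: vprod_seq_inj; first exact: prime_seq_flatten.
    by apply: prime_seq_flatten => _ /nseqP [-> _].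
  by rewrite -translate_sum_factors // sum_rs (translate_mulrn n el).
have [||size_Vs Vs_perm] := (B_abs _ BU).2 n (map (map cl) qss).
- move=> _ /mapP [_ /mapP [x xi ->] ->]; have [px ex] := factorsP (hrs x xi).
  apply/(B_atom_map_cl px (zero_class_of_principal px ex)).
  by apply/(irreducible_prime_atom (hrs x xi) px ex); apply: rs_irr.
- by rewrite -map_nseq !flatten_map_map perm_map.
have size_qss : size qss = n by rewrite -size_Vs size_map.
split=> [|x xi]; first by rewrite -size_qss size_map.
have hx := hrs x xi; have [px ex] := factorsP hx.
apply/(associated_principalP hx hr); rewrite ex el; apply: vprod_seq_perm.
apply: (@perm_eq_nseq_block _ _ cl _ qss) (map_f _ xi); first by rewrite size_qss.
  by move=> qs qsi; apply: Vs_perm; apply: map_f.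
move=> p /(prime_seq_flatten pqss) pp.
have [[p0 [_ _ uniq_p0]] | nG1] := pselect (classes_G1 H cl (cl p)).
  left=> q /(prime_seq_flatten pqss) pq clq.
  by rewrite (set_eqE (uniq_p0 q pq clq)) (set_eqE (uniq_p0 p pp erefl)).
by right; apply: B_count nG1 => //; exists p.
Qed.

End Krull.

Theorem mainTheorem12 (Q : zmodType) (H : Q -> Prop)
    (G : zmodType) (cl : (Q -> Prop) -> G) :
  krull H -> is_class_group H cl ->
  ((forall r, m_irreducible H r -> m_abs_irreducible H r) <->
   ((forall U, B_atom (classes_G0 H cl) U -> B_abs_atom (classes_G0 H cl) U) /\
    (forall (U : seq G) (g : G),
        B_atom (classes_G0 H cl) U -> classes_G0 H cl g ->
        ~ classes_G1 H cl g -> (count_mem g U <= 1)%N))).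
Proof.
move=> KH CG; split=> [abs | [B_abs B_count]].
  split; first exact: B_abs_atom_of_abs_irreducible KH CG abs.
  exact: count_le1_of_abs_irreducible KH CG abs.
exact: abs_irreducible_of_B KH CG B_abs B_count.
Qed.
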